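(* Let $C_\bullet(L)$ be the chain complex with $C_n(L)=\mathrm{id}_L\otimes_R B_+^{\otimes_R n}\otimes_R\mathrm{id}_L$ and differential $d(a_1\otimes\cdots\otimes a_n)=\sum_{i=1}^{n-1}(-1)^i a_1\otimes\cdots\otimes a_ia_{i+1}\otimes\cdots\otimes a_n$, and let $C_\bullet^{(m)}(L)$ be its subcomplex spanned by tensors of internal degree $m$. Then for all $n\ge1$: $H_n(C_\bullet^{(n)}(L))=0$; $H_n(C_\bullet^{(n-1)}(L))\cong k$ if $n\in\{3,4\}$ and $0$ otherwise; $H_n(C_\bullet^{(n-2)}(L))\cong k$ if $n\in\{7,8\}$ and $0$ otherwise; $H_n(C_\bullet^{(n-3)}(L))\cong k$ if $n\in\{11,12\}$ and $0$ otherwise.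
   Context: Let $k$ be a field with $\operatorname{char}k\neq2,3$. Let $B$ be the graded $k$-algebra with $k$-basis $\mathrm{id}_L,\mathrm{id}_{\mathcal O},\theta$ (degree $0$) and $\eta,\xi,\xi_L$ (degree $1$), whose only nonzero products of basis elements are $\mathrm{id}_L\mathrm{id}_L=\mathrm{id}_L$, $\mathrm{id}_{\mathcal O}\mathrm{id}_{\mathcal O}=\mathrm{id}_{\mathcal O}$, $\mathrm{id}_L\xi_L=\xi_L\mathrm{id}_L=\xi_L$, $\mathrm{id}_{\mathcal O}\xi=\xi\mathrm{id}_{\mathcal O}=\xi$, $\mathrm{id}_L\eta=\eta\,\mathrm{id}_{\mathcal O}=\eta$, $\mathrm{id}_{\mathcal O}\theta=\theta\,\mathrm{id}_L=\theta$, $\theta\eta=\xi$, $\eta\theta=\xi_L$. Let $R=k\langle\mathrm{id}_L,\mathrm{id}_{\mathcal O}\rangle$ and $B_+=\langle\theta,\eta,\xi,\xi_L\rangle$, so $B=R\oplus B_+$; tensor products are over $R$. Thus $B_+^{\otimes_R n}$ has $k$-basis the words $a_1\otimes\cdots\otimes a_n$, $a_i\in\{\theta,\eta,\xi,\xi_L\}$, with the right idempotent of $a_i$ equal to the left idempotent of $a_{i+1}$, where (left, right) idempotents are $\theta:(\mathrm{id}_{\mathcal O},\mathrm{id}_L)$, $\eta:(\mathrm{id}_L,\mathrm{id}_{\mathcal O})$, $\xi:(\mathrm{id}_{\mathcal O},\mathrm{id}_{\mathcal O})$, $\xi_L:(\mathrm{id}_L,\mathrm{id}_L)$; $\mathrm{id}_L\otimes_R(\cdot)\otimes_R\mathrm{id}_L$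 selects words whose first letter has left idempotent $\mathrm{id}_L$ and last letter right idempotent $\mathrm{id}_L$. The internal degree of a word is the sum of the degrees of its letters; $d$ preserves it. *)

From HB Require Import structures.
From mathcomp Require Import all_boot all_order all_algebra.
Set Implicit Arguments. Unset Strict Implicit. Unset Printing Implicit Defensive.
Import GRing.Theory.
Local Open Scope ring_scope.

(* The four basis letters of B_+ : theta, eta, xi, xi_L *)
Inductive letter := th | et | xi | xiL.

Definition letter_to_ord (a : letter) : 'I_4 :=
  match a with th => inord 0 | et => inord 1 | xi => inord 2 | xiL => inord 3 end.
Definition ord_to_letter (i : 'I_4) : letter :=
  match val i with 0 => th | 1 => et | 2 => xi | _ => xiL end%N.
Lemma letterK : cancel letter_to_ord ord_to_letter.
Proof. by case; rewrite /ord_to_letter /= inordK. Qed.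
HB.instance Definition _ := Finite.copy letter (can_type letterK).

(* the two idempotents id_L, id_O *)
Inductive idem := IL | IO.
Definition idem_eqb (x y : idem) := match x, y with IL, IL | IO, IO => true | _, _ => false end.

Definition lidem (a : letter) : idem :=
  match a with th => IO | et => IL | xi => IO | xiL => IL end.
Definition ridem (a : letter) : idem :=
  match a with th => IL | et => IO | xi => IO | xiL => IL end.

Definition ldeg (a : letter) : nat := match a with th => 0 | _ => 1 end%N.

(* product in B_+ of two basis letters: theta*eta = xi, eta*theta = xi_L, others 0 *)
Definition lmul (a b : letter) : option letter :=
  match a, b with th, et => Some xi | et, th => Some xiL | _, _ => None end.

(* words in id_L (x) B_+^{(x) n} (x) id_L : composable, starting and ending at id_L *)
Definition adm (s : seq letter) : bool :=
  match s with
  | [::] => true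
  | a :: s' => [&& idem_eqb (lidem a) IL,
                  path (fun x y => idem_eqb (ridem x) (lidem y)) a s'
                & idem_eqb (ridem (last a s')) IL]
  end.

Definition wdeg (s : seq letter) : nat := (\sum_(a <- s) ldeg a)%N.

(* basis of C_n^{(m)}(L) : admissible words of length n and internal degree m *)
Definition Wd (n : nat) (m : int) :=
  {w : n.-tuple letter | adm w && ((wdeg w)%:Z == m)}.

Definition C (K : fieldType) (n : nat) (m : int) : vectType K := {ffun Wd n m -> K^o}.

(* multiply the letters at 0-based positions j, j+1 (if the product is nonzero) *)
Definition contract (s : seq letter) (j : nat) : option (seq letter) :=
  match lmul (nth th s j) (nth th s j.+1) with
  | Some c => Some (take j s ++ c :: drop j.+2 s)
  | None => None
  end.

(* d(a_1..a_n) = sum_{i=1}^{n-1} (-1)^i a_1..(a_i a_{i+1})..a_n, written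
   coordinatewise; 0-based j = i - 1 *)
Definition d_fun (K : fieldType) (n : nat) (m : int) (f : C K n m) : C K n.-1 m :=
  [ffun v : Wd n.-1 m =>
     \sum_(w : Wd n m) \sum_(j < n.-1 | contract (val (val w)) j == Some (val (val v)))
        ((-1) ^+ j.+1 : K) *: f w].

Definition d (K : fieldType) (n : nat) (m : int) : 'Hom(C K n m, C K n.-1 m) :=
  linfun (@d_fun K n m).

(* dimension of H_n(C^{(m)}) = ker d_n / (im d_{n+1} /\ ker d_n) *)
Definition hdim (K : fieldType) (n : nat) (m : int) : nat :=
  (\dim (lker (d K n m)) - \dim ((limg (d K n.+1 m) :&: lker (d K n m))%VS))%N.

(* Since every letter of B_+ has prescribed idempotents, an admissible word
   starting at id_L is determined by its binary code: true for the
   idempotent-preserving letters xi, xi_L and false for theta, eta.  The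
   only nonzero products theta*eta = xi and eta*theta = xi_L merge two
   switching letters into a preserving one, so on codes the differential
   replaces a true by false,false.  Weighting false by 1 and true by 2, a
   word of internal degree m has weight 2m.

   On functions of binary words we define this differential (bdry), a
   contracting homotopy (hop) and a projection (proj) onto the alternating
   word false,true,false,... with id = proj + bdry hop + hop bdry, and
   proj bdry = 0.  Transported to C_n^(m)(L), this shows that H_n(C^(m)) is
   spanned by the alternating word of length n when its weight n + n/2 is 2m
   and vanishes otherwise (in any characteristic).  For m = n - t this
   happens exactly for n = 4t - 1 and n = 4t, which gives the theorem. *)

From HB Require Import structures.
From mathcomp Require Import all_boot all_order all_algebra.
From mathcomp Require Import ring zify.

Set Implicit Arguments.
Unset Strict Implicit.
Unset Printing Implicit Defensive.

Import GRing.Theory.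
Local Open Scope ring_scope.

Lemma seq_ind2 (T : Type) (P : seq T -> Prop) :
  P [::] -> (forall x, P [:: x]) -> (forall x y s, P s -> P [:: x, y & s]) ->
  forall s, P s.
Proof.
move=> P0 P1 P2 s; suff [] : P s /\ forall x, P (x :: s) by [].
elim: s => [|y s [IHs IHc]]; first by [].
by split; [exact: IHc | move=> x; exact: P2].
Qed.

Lemma nat_ind2 (P : nat -> Prop) :
  P 0%N -> P 1%N -> (forall k, P k -> P k.+2) -> forall k, P k.
Proof.
move=> P0 P1 P2 k; suff [] : P k /\ P k.+1 by [].
by elim: k => [|k [IHk IHk1]]; [split | split; last exact: P2].
Qed.

Section BinaryComplex.
Variable K : fieldType.
Implicit Types (f g : seq bool -> K) (w v u : seq bool).

(* If f gives the coefficients of a chain on binary words, bdry f gives those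
   of its boundary: bdry f v is the sum, over the positions j with v_j = true,
   of (-1)^(j+1) f (v with v_j replaced by false,false) (see bdry_sum).  The
   recursive form below, peeling off the first letter and flipping the sign,
   is the one the homotopy argument uses. *)
Fixpoint bdry f v : K :=
  if v is x :: v' then
    (if x then - f [:: false, false & v'] else 0) - bdry (fun u => f (x :: u)) v'
  else 0.

Lemma bdry_ext f g v : f =1 g -> bdry f v = bdry g v.
Proof. by elim: v f g => [|x v IH] f g fg //=; rewrite fg (IH _ (fun u => g (x :: u))). Qed.

Lemma bdryD f g v : bdry (fun u => f u + g u) v = bdry f v + bdry g v.
Proof.
elim: v f g => [|x v IH] f g /=; first by rewrite addr0.
by rewrite (IH (fun u => f (x :: u)) (fun u => g (x :: u))); case: x; ring.
Qed.

Lemma bdryN f v : bdry (fun u => - f u) v = - bdry f v.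
Proof. by elim: v f => [|x v IH] f /=; rewrite ?oppr0 // IH; case: x; ring. Qed.

Fixpoint has_ff u : bool :=
  if u is x :: u' then (if u' is y :: _ then ~~ x && ~~ y else false) || has_ff u'
  else false.

(* Every boundary coordinate is read off at a word containing false,false. *)
Lemma bdry_no_ff f v : (forall u, has_ff u -> f u = 0) -> bdry f v = 0.
Proof.
elim: v f => [|x v IH] f f0 //=; rewrite IH => [|u ffu]; last first.
  by apply: f0; rewrite /= ffu orbT.
by case: x; rewrite ?f0 //=; ring.
Qed.

Lemma bdry0 f v : f =1 (fun=> 0) -> bdry f v = 0.
Proof. by move=> f0; apply: bdry_no_ff => u _; exact: f0. Qed.

(* Weight of a binary word: false counts 1, true counts 2.  Replacing a true
   by false,false preserves weight, so bdry f v only reads f at words of the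
   weight of v and one letter longer. *)
Fixpoint wt u : nat := if u is b :: u' then ((if b then 2 else 1) + wt u')%N else 0%N.

Lemma bdry_local f g v :
  (forall u, size u = (size v).+1 -> wt u = wt v -> f u = g u) -> bdry f v = bdry g v.
Proof.
elim: v f g => [|x v IH] f g fg //=.
rewrite (IH (fun u => f (x :: u)) (fun u => g (x :: u))) => [|u /= su wu]; last first.
  by apply: fg; rewrite /= ?su ?wu.
by case: x fg => fg //; rewrite fg.
Qed.

Definition expand v j := take j v ++ [:: false, false & drop j.+1 v].

Lemma bdry_sum f v : bdry f v =
  \sum_(0 <= j < size v) (if nth false v j then (-1) ^+ j.+1 * f (expand v j) else 0).
Proof.
elim: v f => [|x v IH] f /=; first by rewrite big_geq.
rewrite big_nat_recl // IH /= expr1 -sumrN; congr (_ + _).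
  by case: x; rewrite /expand /= ?mulN1r ?drop0.
apply: eq_bigr => j _; case: ifP => _; last exact: oppr0.
by rewrite [in RHS]exprS mulN1r mulNr.
Qed.

Definition rho f v := f [:: false, true & v] + f [:: true, false & v].

Lemma rho_bdry f v : rho (bdry f) v = bdry (rho f) v.
Proof. by rewrite /rho /= (bdryD (fun u => f [:: false, true & u])); ring. Qed.

(* The contracting homotopy. *)
Fixpoint hop f w : K :=
  match w with
  | false :: false :: u => - f (true :: u)
  | false :: true :: v => hop (rho f) v
  | _ => 0
  end.

(* The projection: proj f w vanishes unless w is the alternating word
   false,true,false,true,... of its length (see proj_alt). *)
Fixpoint proj f w : K :=
  match w with
  | [::] => f [::]
  | [:: false] => f [:: false]
  | false :: true :: v => proj (rho f) v
  | _ => 0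
  end.

Lemma hop_ext f g w : f =1 g -> hop f w = hop g w.
Proof.
elim/seq_ind2: w f g => [|[]|[] [] w IH] f g fg //=; rewrite ?fg //.
by apply: IH => u; rewrite /rho !fg.
Qed.

Lemma proj_ext f g w : f =1 g -> proj f w = proj g w.
Proof.
elim/seq_ind2: w f g => [|[]|[] [] w IH] f g fg //=; rewrite ?fg //.
by apply: IH => u; rewrite /rho !fg.
Qed.

Lemma hop0 f w : f =1 (fun=> 0) -> hop f w = 0.
Proof.
elim/seq_ind2: w f => [|[]|[] [] w IH] f f0 //=; rewrite ?f0 ?oppr0 //.
by apply: IH => u; rewrite /rho !f0 addr0.
Qed.

Lemma homotopy f w : f w = proj f w + bdry (hop f) w + hop (bdry f) w.
Proof.
elim/seq_ind2: w f => [|[]|[] [] w IH] f /=; rewrite ?(@bdry0 (fun=> 0)) //; try ring.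
- rewrite (hop_ext _ (rho_bdry f)).
  rewrite (@bdry_ext (fun u => hop f [:: false, true & u]) (hop (rho f))) //.
  have -> : f [:: false, true & w] = rho f w - f [:: true, false & w] by rewrite /rho; ring.
  by rewrite IH; ring.
- by rewrite bdryN; ring.
Qed.

Lemma proj_bdry f w : proj (bdry f) w = 0.
Proof.
elim/seq_ind2: w f => [|[]|[] [] w IH] f //=; first ring.
by rewrite (proj_ext _ (rho_bdry f)) IH.
Qed.

Fixpoint alt k : seq bool :=
  match k with 0 => [::] | 1 => [:: false] | k'.+2 => [:: false, true & alt k'] end%N.

Lemma alt_no_ff k : ~~ has_ff (alt k).
Proof. by elim/nat_ind2: k => // k /=; case: (alt k). Qed.

Lemma size_alt k : size (alt k) = k.
Proof. by elim/nat_ind2: k => //= k ->. Qed.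

Lemma wt_alt k : wt (alt k) = (k + k./2)%N.
Proof. by elim/nat_ind2: k => //= k ->; rewrite !addnS !addSn. Qed.

Lemma proj_alt f w : w != alt (size w) -> proj f w = 0.
Proof.
elim/seq_ind2: w f => [|[]|[] [] w IH] f //=; rewrite ?eqxx // => ne.
by apply: IH; apply: contra ne => /eqP {1}->.
Qed.

Lemma proj_alt_delta k : proj (fun u => (u == alt k)%:R) (alt k) = 1.
Proof.
elim/nat_ind2: k => [||k IH] /=; rewrite ?eqxx //.
by rewrite -[RHS]IH; apply: proj_ext => u; rewrite /rho !eqseq_cons /= addr0.
Qed.

End BinaryComplex.

(* A letter is coded by true when it preserves the idempotent (xi, xi_L) and
   by false when it switches it (theta, eta). *)
Definition bit (a : letter) : bool := match a with th | et => false | _ => true end.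
Definition enc (s : seq letter) : seq bool := map bit s.

Definition flip (i : idem) : idem := if i is IL then IO else IL.
Definition letter_at (i : idem) (b : bool) : letter :=
  match i, b with IL, false => et | IL, true => xiL | IO, false => th | IO, true => xi end.

(* The unique composable word starting at the idempotent i with code e. *)
Fixpoint dec (i : idem) (e : seq bool) : seq letter :=
  if e is b :: e' then letter_at i b :: dec (if b then i else flip i) e' else [::].

Fixpoint chain (i : idem) (s : seq letter) : bool :=
  if s is a :: s' then idem_eqb (lidem a) i && chain (ridem a) s' else true.
Fixpoint endi (i : idem) (s : seq letter) : idem :=
  if s is a :: s' then endi (ridem a) s' else i.

Lemma enc_dec i e : enc (dec i e) = e.
Proof. by elim: e i => [|b e IH] [] //=; case: b; rewrite IH. Qed.

Lemma chain_dec i e : chain i (dec i e).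
Proof. by elim: e i => [|b e IH] [] //=; case: b; rewrite IH. Qed.

Lemma dec_enc i s : chain i s -> dec i (enc s) = s.
Proof. by elim: s i => [|a s IH] [] //=; case: a => //= /IH ->. Qed.

Lemma size_dec i e : size (dec i e) = size e.
Proof. by elim: e i => [|b e IH] i //=; rewrite IH. Qed.

Lemma endi_dec i e : endi i (dec i e) = if odd (wt e) then flip i else i.
Proof. by elim: e i => [|b e IH] i //=; case: b; case: i; rewrite IH //=; case: odd. Qed.

(* Degree versus weight: with pot IL = 1 and pot IO = 0, every letter
   satisfies 2 * degree + pot (right idem) = weight + pot (left idem). *)
Definition pot (i : idem) : nat := if i is IL then 1%N else 0%N.

Lemma wdeg_chain i s : chain i s -> (2 * wdeg s + pot (endi i s) = wt (enc s) + pot i)%N.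
Proof.
rewrite /wdeg; elim: s i => [|a s IH] i /=; first by rewrite big_nil addnC.
rewrite big_cons => /andP [ia /IH]; rewrite mulnDr -addnA => ->.
by case: a ia; case: i => //= _; ring.
Qed.

Lemma adm_chain s : adm s = chain IL s && idem_eqb (endi IL s) IL.
Proof.
have path_chain a s' :
    path (fun x y => idem_eqb (ridem x) (lidem y)) a s' = chain (ridem a) s'.
  by elim: s' a => [|b s' IH] a //=; rewrite IH; case: (ridem a); case: (lidem b).
have endi_last a s' : endi (ridem a) s' = ridem (last a s').
  by elim: s' a => [|b s' IH] a //=.
by case: s => [|a s] //=; rewrite path_chain endi_last -andbA; case: (lidem a).
Qed.

Definition code {n m} (v : Wd n m) : seq bool := enc (val (val v)).

Lemma size_code {n m} (v : Wd n m) : size (code v) = n.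
Proof. by rewrite /code size_map size_tuple. Qed.

Lemma Wd_chain {n m} (v : Wd n m) : chain IL (val (val v)).
Proof. by case: v => /= t /andP []; rewrite adm_chain => /andP []. Qed.

Lemma wt_code {n m} (v : Wd n m) : (wt (code v))%:Z = 2 * m.
Proof.
rewrite /code; case: v => t /= /andP []; rewrite adm_chain => /andP [ch e] /eqP <-.
have := wdeg_chain ch; move: e; case: (endi IL t) => //= _ /eqP.
by rewrite eqn_add2r => /eqP <-; rewrite PoszM.
Qed.

Lemma code_inj {n m} (v1 v2 : Wd n m) : code v1 = code v2 -> v1 = v2.
Proof.
move=> e; apply: val_inj; apply: val_inj.
by rewrite -(dec_enc (Wd_chain v1)) -(dec_enc (Wd_chain v2)); congr dec.
Qed.

Lemma code_surj n m e : size e = n -> (wt e)%:Z = 2 * m -> exists v : Wd n m, code v = e.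
Proof.
move=> se; case: m => [k|k] we; last by move: we; lia.
have {}we : wt e = (2 * k)%N by apply/eqP; rewrite -eqz_nat PoszM we.
have st : size (dec IL e) == n by rewrite size_dec se.
have adm_e : adm (Tuple st) && ((wdeg (Tuple st))%:Z == k%:Z).
  rewrite adm_chain /= chain_dec endi_dec we oddM /=.
  have := wdeg_chain (chain_dec IL e); rewrite endi_dec we oddM enc_dec /=.
  by move/eqP; rewrite eqn_add2r => /eqP; lia.
by exists (exist _ (Tuple st) adm_e); rewrite /code /= enc_dec.
Qed.

Lemma expand_cons x e j : expand (x :: e) j.+1 = x :: expand e j.
Proof. by []. Qed.

Lemma contract_cons a s j : contract (a :: s) j.+1 = omap (cons a) (contract s j).
Proof. by rewrite /contract /=; case: lmul. Qed.

Lemma contract_iff i W V j : chain i W -> chain i V -> (j.+1 < size W)%N ->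
  (contract W j == Some V) = nth false (enc V) j && (enc W == expand (enc V) j).
Proof.
move=> cW cV sW; apply/idP/idP.
  move/eqP; elim: j W V sW {cW cV} => [|j IH] [|a W] V //=.
    case: W => [|b W] //= _; rewrite /contract /=.
    by case: a; case: b => //= -[<-]; rewrite drop0 /expand /= drop0.
  move=> sW; rewrite contract_cons; case E: (contract W j) => [V'|] //= [<-].
  have /andP [Vj /eqP ->] := IH _ _ sW E.
  rewrite (_ : enc (a :: V') = bit a :: enc V') // /= Vj.
  by rewrite expand_cons eqseq_cons !eqxx.
case/andP=> Vj /eqP eW.
have jV : (j < size (enc V))%N.
  by rewrite ltnNge; apply: contraL Vj => /(nth_default false) ->.
rewrite -(dec_enc cW) -(dec_enc cV) eW; apply/eqP; move: (enc V) jV Vj => e {cW cV eW sW}.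
elim: j i e => [|j IH] i [|b e] //= je ej.
  by case: b ej => // _; case: i; rewrite /contract /= !drop0.
by rewrite contract_cons -/(expand e j) (IH _ _ je ej).
Qed.

Section Coordinates.
Variable K : fieldType.

(* A chain x of C_n^(m) seen as a function on binary words: its coefficient on
   the basis word with the given code, and 0 on words that are not codes. *)
Definition coord {n m} (x : C K n m) (w : seq bool) : K :=
  \sum_(v : Wd n m | code v == w) x v.

Definition lift {n m} (f : seq bool -> K) : C K n m := [ffun v => f (code v)].

Lemma coord_code {n m} (x : C K n m) v : coord x (code v) = x v.
Proof. by rewrite /coord (big_pred1 v) // => v'; apply/eqP/eqP => [/code_inj|->]. Qed.

Lemma coord_out {n m} (x : C K n m) w :
  ~~ ((size w == n) && ((wt w)%:Z == 2 * m)) -> coord x w = 0.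
Proof.
move=> w_out; rewrite /coord big_pred0 // => v; apply/negP => /eqP vw.
by move: w_out; rewrite -vw size_code wt_code !eqxx.
Qed.

Lemma coord_lift {n m} f w : size w = n -> (wt w)%:Z = 2 * m ->
  coord (lift f : C K n m) w = f w.
Proof. by move=> sw ww; have [v <-] := code_surj sw ww; rewrite coord_code ffunE. Qed.

Lemma coord0 {n m} w : coord (0 : C K n m) w = 0.
Proof. by rewrite /coord big1 // => v _; rewrite ffunE. Qed.

Lemma d_fun_linear n m : linear (@d_fun K n m).
Proof.
move=> a x y; apply/ffunP => v; rewrite !ffunE scaler_sumr -big_split.
apply: eq_bigr => w _; rewrite scaler_sumr -big_split; apply: eq_bigr => j _.
by rewrite !ffunE scalerDr !scalerA mulrC.
Qed.

Lemma dE n m (x : C K n m) : d K n m x = d_fun x.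
Proof.
pose dL : {linear _ -> _} :=
  HB.pack (@d_fun K n m) (GRing.isLinear.Build _ _ _ _ _ (@d_fun_linear n m)).
exact: (lfunE dL x).
Qed.

Lemma d_code {n m} (x : C K n.+1 m) (v : Wd n m) :
  d K n.+1 m x v = bdry (coord x) (code v).
Proof.
rewrite dE /d_fun ffunE bdry_sum size_code big_mkord (exchange_big_dep xpredT) //=.
apply: eq_bigr => j _.
have contractE (w : Wd n.+1 m) : (contract (val (val w)) j == Some (val (val v))) =
    nth false (code v) j && (code w == expand (code v) j).
  by apply: (contract_iff (Wd_chain w) (Wd_chain v)); rewrite size_tuple ltnS.
case: ifP => vj.
  by rewrite /coord mulr_sumr; apply: eq_big => [w|w _]; rewrite ?contractE ?vj.
by rewrite big_pred0 // => w; rewrite contractE vj.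
Qed.

Lemma coord_d {n m} (x : C K n.+1 m) w : coord (d K n.+1 m x) w = bdry (coord x) w.
Proof.
have [/andP [/eqP sw /eqP ww] | w_out] := boolP ((size w == n) && ((wt w)%:Z == 2 * m)).
  by have [v <-] := code_surj sw ww; rewrite coord_code d_code.
rewrite coord_out // (@bdry_local _ _ (fun=> 0)) ?bdry0 // => u su wu.
by apply: coord_out; rewrite su wu eqSS.
Qed.

Lemma cycle_decomposition {n m} (x : C K n.+1 m) : d K n.+1 m x = 0 ->
  forall v, x v = proj (coord x) (code v) + d K n.+2 m (lift (hop (coord x))) v.
Proof.
move=> dx v; rewrite -[LHS]coord_code (homotopy (coord x) (code v)).
rewrite (@hop0 _ (bdry (coord x))) ?addr0 => [|u]; last by rewrite -coord_d dx coord0.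
congr (_ + _); rewrite d_code; apply: bdry_local => u su wu.
by rewrite coord_lift // ?su ?wu ?size_code ?wt_code.
Qed.

Definition alt_chain n m : C K n m := lift (fun u => (u == alt n)%:R).

Lemma coord_alt_chain n m u : (wt (alt n))%:Z = 2 * m ->
  coord (alt_chain n m) u = (u == alt n)%:R.
Proof.
move=> walt; have [/andP [/eqP su /eqP wu] | u_out] :=
  boolP ((size u == n) && ((wt u)%:Z == 2 * m)); first by rewrite coord_lift.
rewrite coord_out //; case: eqP => // ua.
by move: u_out; rewrite ua size_alt walt !eqxx.
Qed.

End Coordinates.

Section HomologyDimension.
Variables (K : fieldType) (V0 V1 V2 : vectType K).
Variables (d1 : 'Hom(V1, V0)) (d2 : 'Hom(V2, V1)).

Lemma homology_dim0 : (forall x, d1 x = 0 -> exists y, x = d2 y) ->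
  (\dim (lker d1) - \dim (limg d2 :&: lker d1))%N = 0%N.
Proof.
move=> exact_d; apply/eqP; rewrite subn_eq0; apply: dimvS; apply/subvP => x x_cycle.
rewrite memv_cap x_cycle andbT; move: x_cycle; rewrite memv_ker => /eqP /exact_d [y ->].
exact: memv_img (memvf y).
Qed.

Lemma homology_dim1 z : d1 z = 0 -> (forall y, d2 y != z) ->
  (forall x, d1 x = 0 -> exists c y, x = d2 y + c *: z) ->
  (\dim (lker d1) - \dim (limg d2 :&: lker d1))%N = 1%N.
Proof.
move=> z_cycle z_nonbdry z_gen; set B := (limg d2 :&: lker d1)%VS.
have cyclesE : lker d1 = (B + <[z]>)%VS.
  apply/eqP; rewrite eqEsubv subv_add capvSr /= -memvE memv_ker z_cycle eqxx andbT.
  apply/subvP => x; rewrite memv_ker => /eqP x_cycle.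
  have [c [y xE]] := z_gen x x_cycle; rewrite xE.
  apply: memv_add; last by rewrite memvZ // memv_line.
  rewrite memv_cap (memv_img _ (memvf y)) memv_ker.
  have -> : d2 y = x - c *: z by rewrite xE addrK.
  by rewrite linearB linearZ /= x_cycle z_cycle scaler0 subr0.
have z_neq0 : z != 0 by apply: contraNneq (z_nonbdry 0) => ->; rewrite linear0.
have B_line0 : (B :&: <[z]> = 0)%VS.
  apply/eqP; rewrite -subv0; apply/subvP => w; rewrite memv_cap memv0 => /andP [].
  rewrite memv_cap => /andP [/memv_imgP [y _ ->] _] /vlineP [k dyk].
  have [k0|k_neq0] := eqVneq k 0; first by rewrite dyk k0 scale0r.
  by move: (z_nonbdry (k^-1 *: y)); rewrite linearZ /= dyk scalerA mulVf // scale1r eqxx.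
have := dimv_sum_cap B <[z]>; rewrite -cyclesE B_line0 dimv0 addn0 dim_vline z_neq0 => ->.
by rewrite addKn.
Qed.

End HomologyDimension.

Lemma hdim_alt (K : fieldType) n m :
  hdim K n.+1 m = if (wt (alt n.+1))%:Z == 2 * m then 1%N else 0%N.
Proof.
rewrite /hdim; case: ifP => [/eqP walt | walt].
  apply: (homology_dim1 (z := alt_chain K n.+1 m)).
  - apply/ffunP => v; rewrite ffunE d_code bdry_no_ff // => u ffu.
    rewrite coord_alt_chain //; case: eqP ffu => // ->.
    by rewrite (negbTE (alt_no_ff _)).
  - move=> y; apply/negP => /eqP dy.
    have := proj_bdry (coord y) (alt n.+1).
    rewrite -(proj_ext _ (coord_d y)) dy (proj_ext _ (fun u => coord_alt_chain K u walt)).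
    by rewrite proj_alt_delta => /eqP; rewrite oner_eq0.
  - move=> x dx; exists (proj (coord x) (alt n.+1)), (lift (hop (coord x))).
    apply/ffunP => v; rewrite (cycle_decomposition dx) !ffunE addrC; congr (_ + _).
    have [->|v_alt] := eqVneq (code v) (alt n.+1); first exact/esym/mulr1.
    by rewrite proj_alt ?size_code //; exact/esym/mulr0.
apply: homology_dim0 => x dx; exists (lift (hop (coord x))).
apply/ffunP => v; rewrite (cycle_decomposition dx) proj_alt ?add0r // size_code.
by apply: contraFneq walt => <-; rewrite wt_code.
Qed.

Lemma alt_degree n t :
  ((wt (alt n))%:Z == 2 * (n%:Z - t%:Z)) = (n \in [:: (4 * t).-1; 4 * t]%N).
Proof.
rewrite wt_alt !inE; have := odd_double_half n.
by case: (odd n) => /= E; apply/eqP/orP; lia.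
Qed.

Lemma hdim_shift (K : fieldType) n t :
  hdim K n.+1 (n.+1%:Z - t%:Z) = if n.+1 \in [:: (4 * t).-1; 4 * t]%N then 1%N else 0%N.
Proof. by rewrite hdim_alt alt_degree. Qed.

Theorem mainTheorem2 (K : fieldType) (h2 : 2%N \notin [pchar K]) (h3 : 3%N \notin [pchar K]) :
  forall n : nat, (0 < n)%N ->
    [/\ hdim K n (n%:Z) = 0%N,
        hdim K n (n%:Z - 1) = (if n \in [:: 3; 4]%N then 1 else 0)%N,
        hdim K n (n%:Z - 2) = (if n \in [:: 7; 8]%N then 1 else 0)%N
      & hdim K n (n%:Z - 3) = (if n \in [:: 11; 12]%N then 1 else 0)%N].
Proof.
case=> // n _; split; first by rewrite -[n.+1%:Z]subr0 (hdim_shift K n 0).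
- exact: (hdim_shift K n 1).
- exact: (hdim_shift K n 2).
- exact: (hdim_shift K n 3).
Qed.
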